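(* There is a multi-valued function $F: [0,1] \Rightarrow \mathbb{R}$ such that $F(x)$ is closed for every $x\in[0,1]$, the graph of $F$ is a $\Pi^0_2$ subset of $[0,1]\times\mathbb{R}$, and the set of points of continuity of $F$ is not a $\Pi^0_3$ subset of $[0,1]$.
   Context: A multi-valued function $F: X \Rightarrow Y$ assigns to each $x$ a nonempty set $F(x)\subseteq Y$ and is identified with its graph $\{(x,y): y\in F(x)\}\subseteq X\times Y$. For metric spaces $(X,p),(Y,d)$, $F$ is continuous at $x$ if there is some $y \in F(x)$ such that for every $\varepsilon>0$ there is $\delta>0$ such that for every $x' \in B_p(x,\delta)$ there is $y' \in F(x')$ with $d(y,y')<\varepsilon$. Borel hierarchy: $\Sigma^0_1$ = open; $\Sigma^0_{n+1}$ = countable unions of sets whose complements are $\Sigma^0_k$ for some $k\le n$; $\Pi^0_n$ = complements of $\Sigma^0_n$ sets ($\Pi^0_2=G_\delta$, $\Pi^0_3$ = countable intersections of $F_\sigma$ sets). *)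

From Stdlib Require Import Reals Lra.
Open Scope R_scope.

(* Borel hierarchy relative to a subspace D of a type T whose topology is
   given by the predicate O of open sets. *)
Inductive Sigma0 {T : Type} (O : (T -> Prop) -> Prop) (D : T -> Prop)
  : nat -> (T -> Prop) -> Prop :=
| Sigma0_open : forall (U A : T -> Prop),
    O U -> (forall x, A x <-> (D x /\ U x)) -> Sigma0 O D 1 A
| Sigma0_union : forall (n : nat) (A : T -> Prop) (B : nat -> T -> Prop),
    (forall k x, B k x -> D x) ->
    (forall k, exists j, (1 <= j <= n)%nat /\
                 Sigma0 O D j (fun x => D x /\ ~ B k x)) ->
    (forall x, A x <-> exists k, B k x) ->
    Sigma0 O D (S n) A.

Definition Pi0 {T : Type} (O : (T -> Prop) -> Prop) (D : T -> Prop)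
  (n : nat) (A : T -> Prop) : Prop :=
  (forall x, A x -> D x) /\ Sigma0 O D n (fun x => D x /\ ~ A x).

(* Open sets of R x R (product topology = max-metric topology). *)
Definition open_RR (U : R * R -> Prop) : Prop :=
  forall p, U p -> exists e, 0 < e /\
    forall q, Rabs (fst q - fst p) < e -> Rabs (snd q - snd p) < e -> U q.

Definition I01 (x : R) : Prop := 0 <= x <= 1.
Definition I01xR (p : R * R) : Prop := I01 (fst p).

(* A multi-valued function F : [0,1] => R is a relation F x y (y \in F(x));
   only its values at x in [0,1] matter. *)
Definition graph (F : R -> R -> Prop) (p : R * R) : Prop :=
  I01 (fst p) /\ F (fst p) (snd p).

Definition mv_continuous_at (F : R -> R -> Prop) (x : R) : Prop :=
  exists y, F x y /\
    forall eps, 0 < eps -> exists delta, 0 < delta /\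
      forall x', I01 x' -> Rabs (x' - x) < delta ->
        exists y', F x' y' /\ Rabs (y - y') < eps.

Definition continuity_points (F : R -> R -> Prop) (x : R) : Prop :=
  I01 x /\ mv_continuous_at F x.

(* Base-4 expansions with digits 0 and 1 embed Cantor space [nat -> bool]
   homeomorphically onto a closed set K of [0,1]; through Cantor pairing a point
   d of Cantor space is a bit matrix.  Off K the function takes every real
   value.  At the image of d its values are the numbers m + v_m, where v_m is the
   infimum of 2^-(n+1) over the marked rows n of column m (row 0 counts as
   marked), so v_m = 0 iff column m has infinitely many marks.  If some column
   is infinite, the value m is stable under small perturbations of d; if all
   columns are finite, every value m + v_m with v_m > 0 is destroyed by marking
   a far cell of column m.  Hence on K the discontinuity points are the
   matrices with finite columns; by a diagonal construction this set is not
   Sigma^0_3, whereas a Sigma^0_3 description of the discontinuity points in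
   [0,1] would pull back to one along the embedding.  The graph is
   G_delta because the values at d are cut out by countably many conditions
   that are open in (d, y), and K is closed. *)

From Stdlib Require Import Reals Lra Lia Classical ClassicalEpsilon FunctionalExtensionality Cantor.
From Coquelicot Require Import Hierarchy Series.
Open Scope R_scope.

(** * Cantor space and its embedding into [0,1] *)

Definition agree (d d' : nat -> bool) (L : nat) : Prop :=
  forall q, (q < L)%nat -> d q = d' q.

Lemma agree_le d d' L L' : (L <= L')%nat -> agree d d' L' -> agree d d' L.
Proof. intros HL A q Hq; apply A; lia. Qed.

Lemma agree_tail d d' L : d 0%nat = d' 0%nat ->
  agree (fun q => d (S q)) (fun q => d' (S q)) L -> agree d d' (S L).
Proof. intros H0 A [|q] Hq; [exact H0|apply A; lia]. Qed.

Definition copen (V : (nat -> bool) -> Prop) : Prop :=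
  forall d, V d -> exists L, forall d', agree d d' L -> V d'.

Definition cantor_Gdelta (C : (nat -> bool) -> Prop) : Prop :=
  exists V : nat -> (nat -> bool) -> Prop,
    (forall i, copen (V i)) /\ forall d, C d <-> forall i, V i d.

(* A closed set is the intersection of its [i]-neighbourhoods. *)
Lemma copen_compl_Gdelta W : copen W -> cantor_Gdelta (fun d => ~ W d).
Proof.
  intro HW; exists (fun i d => exists d', agree d d' i /\ ~ W d'); split.
  - intros i d [d' [A Hd']]; exists i; intros d'' A'; exists d'; split; [|exact Hd'].
    intros q Hq; rewrite <- A' by exact Hq; apply A, Hq.
  - intro d; split.
    + intros Hd i; exists d; split; [intros q _; reflexivity|exact Hd].
    + intros HV Hd; destruct (HW d Hd) as [L HL].
      destruct (HV L) as [d' [A Hd']]; exact (Hd' (HL d' A)).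
Qed.

Definition bit (b : bool) : R := if b then 1 else 0.

Definition cantor_map (d : nat -> bool) : R :=
  Series (fun q => bit (d q) * (/4) ^ S q).

Lemma quarter_pow_pos n : 0 < (/4) ^ n.
Proof. apply pow_lt; lra. Qed.

Lemma quarter_pow_le m n : (m <= n)%nat -> (/4) ^ n <= (/4) ^ m.
Proof.
  induction 1 as [|n _ IH]; [lra|].
  simpl; pose proof (quarter_pow_pos n); lra.
Qed.

Lemma quarter_pow_small e : 0 < e -> exists L, (/4) ^ L < e.
Proof.
  intro He.
  destruct (pow_lt_1_zero (/4) ltac:(rewrite Rabs_pos_eq; lra) e He) as [L HL].
  exists L; specialize (HL L (le_n L)).
  rewrite Rabs_pos_eq in HL by (left; apply quarter_pow_pos); exact HL.
Qed.

Lemma bit_bounds b : 0 <= bit b <= 1.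
Proof. destruct b; simpl; lra. Qed.

Lemma is_series_quarter : is_series (fun q => (/4) ^ S q) (1/3).
Proof.
  replace (1/3) with (/4 * / (1 - /4)) by field.
  apply (is_series_scal_l (/4) (fun q => (/4) ^ q)).
  apply is_series_geom; rewrite Rabs_pos_eq; lra.
Qed.

Lemma cantor_terms_bounds d q : 0 <= bit (d q) * (/4) ^ S q <= (/4) ^ S q.
Proof.
  pose proof (bit_bounds (d q)); pose proof (quarter_pow_pos (S q)); nra.
Qed.

Lemma ex_series_cantor d : ex_series (fun q => bit (d q) * (/4) ^ S q).
Proof.
  apply (@ex_series_le R_AbsRing R_CompleteNormedModule
           _ (fun q => (/4) ^ S q)).
  - intro q; change (Rabs (bit (d q) * (/4) ^ S q) <= (/4) ^ S q).
    rewrite Rabs_pos_eq; apply cantor_terms_bounds.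
  - eexists; apply is_series_quarter.
Qed.

Lemma cantor_map_bounds d : 0 <= cantor_map d <= 1/3.
Proof.
  split.
  - replace 0 with (Series (fun _ => 0 * 0)) by (rewrite Series_scal_l; ring).
    apply Series_le; [|apply ex_series_cantor].
    intro q; pose proof (cantor_terms_bounds d q); lra.
  - rewrite <- (is_series_unique _ _ is_series_quarter).
    apply Series_le; [apply cantor_terms_bounds|eexists; apply is_series_quarter].
Qed.

Lemma cantor_map_I01 d : I01 (cantor_map d).
Proof. pose proof (cantor_map_bounds d); unfold I01; lra. Qed.

Lemma cantor_map_unfold d :
  cantor_map d = (bit (d 0%nat) + cantor_map (fun q => d (S q))) / 4.
Proof.
  unfold cantor_map; rewrite Series_incr_1 by apply ex_series_cantor.
  rewrite (Series_ext _ (fun q => /4 * (bit (d (S q)) * (/4) ^ S q)))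
    by (intro q; simpl; ring).
  rewrite Series_scal_l; simpl; field.
Qed.

Lemma cantor_map_agree_close d d' L :
  agree d d' L -> Rabs (cantor_map d - cantor_map d') <= (/4) ^ L / 3.
Proof.
  revert d d'; induction L as [|L IH]; intros d d' A.
  - pose proof (cantor_map_bounds d); pose proof (cantor_map_bounds d').
    simpl; apply Rabs_le; lra.
  - rewrite (cantor_map_unfold d), (cantor_map_unfold d'), (A 0%nat) by lia.
    replace ((bit (d' 0%nat) + cantor_map (fun q => d (S q))) / 4
             - (bit (d' 0%nat) + cantor_map (fun q => d' (S q))) / 4)
      with (/4 * (cantor_map (fun q => d (S q)) - cantor_map (fun q => d' (S q))))
      by field.
    rewrite Rabs_mult, (Rabs_pos_eq (/4)) by lra; simpl.
    specialize (IH (fun q => d (S q)) (fun q => d' (S q)) (fun q Hq => A (S q) ltac:(lia))).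
    lra.
Qed.

(* Digits 0 and 1 in base 4 leave a gap: a difference in the first digit moves
   the point by at least [1/4 - 1/12]. *)
Lemma cantor_map_close_agree d d' L :
  Rabs (cantor_map d - cantor_map d') < (/4) ^ L / 2 -> agree d d' L.
Proof.
  revert d d'; induction L as [|L IH]; intros d d' Hclose.
  - intros q Hq; lia.
  - set (t := fun q => d (S q)); set (t' := fun q => d' (S q)).
    rewrite (cantor_map_unfold d), (cantor_map_unfold d') in Hclose; fold t t' in Hclose.
    pose proof (cantor_map_bounds t); pose proof (cantor_map_bounds t').
    pose proof (quarter_pow_le 1 (S L) ltac:(lia)); simpl in *.
    assert (Hfirst : d 0%nat = d' 0%nat).
    { destruct (d 0%nat), (d' 0%nat); auto; simpl in Hclose;
        apply Rabs_def2 in Hclose; lra. }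
    apply agree_tail; [exact Hfirst|]; apply IH.
    rewrite Hfirst in Hclose.
    replace ((bit (d' 0%nat) + cantor_map t) / 4 - (bit (d' 0%nat) + cantor_map t') / 4)
      with (/4 * (cantor_map t - cantor_map t')) in Hclose by field.
    rewrite Rabs_mult, (Rabs_pos_eq (/4)) in Hclose by lra; fold t t'; lra.
Qed.

Lemma cantor_map_inj d d' : cantor_map d = cantor_map d' -> d = d'.
Proof.
  intro E; apply functional_extensionality; intro q.
  apply (cantor_map_close_agree d d' (S q)); [|lia].
  rewrite E, Rminus_diag, Rabs_R0; pose proof (quarter_pow_pos (S q)); lra.
Qed.

Lemma copen_preimage_cantor_map U : open_set U -> copen (fun d => U (cantor_map d)).
Proof.
  intros HU d Hd; destruct (HU _ Hd) as [delta Hdelta].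
  destruct (quarter_pow_small delta (cond_pos delta)) as [L HL].
  exists L; intros d' A; apply Hdelta; unfold disc.
  pose proof (cantor_map_agree_close _ _ _ A); pose proof (quarter_pow_pos L).
  rewrite Rabs_minus_sym; lra.
Qed.

Definition cantor_image (x : R) : Prop := exists d, x = cantor_map d.

Lemma eq0_of_quarter_pow_bound a : (forall p, Rabs a <= (/4) ^ p) -> a = 0.
Proof.
  intro Hb; apply NNPP; intro Ha.
  destruct (quarter_pow_small _ (Rabs_pos_lt a Ha)) as [N HN]; specialize (Hb N); lra.
Qed.

(* Approximants at precision [(/4)^p / 4] agree on their first [p] digits, so
   their diagonal is a limit point in Cantor space. *)
Lemma cantor_image_closed x :
  (forall e, 0 < e -> exists d, Rabs (x - cantor_map d) < e) -> cantor_image x.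
Proof.
  intro Hx.
  destruct (choice (fun p d => Rabs (x - cantor_map d) < (/4) ^ p / 4))
    as [c Hc].
  { intro p; apply Hx; pose proof (quarter_pow_pos p); lra. }
  assert (Hagree : forall p q, (q <= p)%nat -> agree (c p) (c q) q).
  { intros p q Hqp; apply cantor_map_close_agree.
    pose proof (Hc p); pose proof (Hc q); pose proof (quarter_pow_le _ _ Hqp).
    replace (cantor_map (c p) - cantor_map (c q))
      with ((x - cantor_map (c q)) - (x - cantor_map (c p))) by ring.
    eapply Rle_lt_trans; [apply Rabs_triang|]; rewrite Rabs_Ropp; lra. }
  set (e := fun n => c (S n) n).
  exists e; apply Rminus_diag_uniq, eq0_of_quarter_pow_bound; intro p.
  assert (Hp : agree e (c p) p).
  { intros n Hn; symmetry; apply (Hagree p (S n)); lia. }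
  pose proof (cantor_map_agree_close _ _ _ Hp); pose proof (Hc p).
  replace (x - cantor_map e)
    with ((x - cantor_map (c p)) - (cantor_map e - cantor_map (c p))) by ring.
  eapply Rle_trans; [apply Rabs_triang|]; rewrite Rabs_Ropp.
  pose proof (quarter_pow_pos p); lra.
Qed.

Lemma cantor_image_compl_open x : ~ cantor_image x ->
  exists e, 0 < e /\ forall d, e <= Rabs (x - cantor_map d).
Proof.
  intro Hx; apply NNPP; intro Hno; apply Hx, cantor_image_closed.
  intros e He; apply NNPP; intro Hfar; apply Hno; exists e; split; [exact He|].
  intro d; apply Rnot_lt_le; intro Hd; apply Hfar; exists d; exact Hd.
Qed.

(** * Bit matrices with finite columns do not form a Sigma^0_3 set *)

Definition cell (m n : nat) : nat := Cantor.to_nat (m, n).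

Definition column (q : nat) : nat := fst (Cantor.of_nat q).

Lemma column_cell m n : column (cell m n) = m.
Proof. unfold column, cell; rewrite Cantor.cancel_of_to; reflexivity. Qed.

Lemma cell_ge m n : (n <= cell m n)%nat.
Proof. unfold cell; pose proof (Cantor.to_nat_non_decreasing m n); lia. Qed.

Definition column_false_from (d : nat -> bool) (m N : nat) : Prop :=
  forall n, (N <= n)%nat -> d (cell m n) = false.

Definition finite_columns (d : nat -> bool) : Prop :=
  forall m, exists N, column_false_from d m N.

Definition set_cell (d : nat -> bool) (p : nat) (q : nat) : bool :=
  if q =? p then true else d q.

Lemma agree_set_cell d p L : (L <= p)%nat -> agree d (set_cell d p) L.
Proof. intros Hp q Hq; unfold set_cell; destruct (Nat.eqb_spec q p); [lia|reflexivity]. Qed.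

Definition region (k : nat) (s : nat -> bool) (L : nat) (d : nat -> bool) : Prop :=
  forall q, ((q < L)%nat -> d q = s q) /\ ((L <= q)%nat -> (column q < k)%nat -> d q = false).

Definition truncate (s : nat -> bool) (L : nat) (q : nat) : bool :=
  if q <? L then s q else false.

Lemma region_truncate k s L : region k s L (truncate s L).
Proof.
  intro q; unfold truncate; split; intros; destruct (Nat.ltb_spec q L); auto; lia.
Qed.

Lemma region_raise k k' s L L' d : (k <= k')%nat -> (L <= L')%nat ->
  region k' (truncate s L) L' d -> region k s L d.
Proof.
  intros Hk HL Hd q; destruct (Hd q) as [Hlt Hge]; unfold truncate in Hlt; split.
  - intro Hq; rewrite Hlt by lia; destruct (Nat.ltb_spec q L); [reflexivity|lia].
  - intros Hq Hc; destruct (Nat.lt_ge_cases q L') as [HqL'|HqL'].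
    + rewrite Hlt by exact HqL'; destruct (Nat.ltb_spec q L); [lia|reflexivity].
    + apply Hge; lia.
Qed.

Definition truncate_mark (s : nat -> bool) (L p : nat) (q : nat) : bool :=
  if q <? L then s q else q =? p.

Lemma region_mark k s L d :
  region k (truncate_mark s L (cell k L)) (S (cell k L)) d ->
  region k s L d /\ d (cell k L) = true.
Proof.
  pose proof (cell_ge k L) as Hp; pose proof (column_cell k L) as Hc.
  intro Hd; unfold truncate_mark in Hd; split.
  - intro q; destruct (Hd q) as [Hlt Hge]; split.
    + intro Hq; rewrite Hlt by lia; destruct (Nat.ltb_spec q L); [reflexivity|lia].
    + intros Hq Hcq; destruct (Nat.lt_ge_cases q (S (cell k L))) as [Hq'|Hq'].
      * rewrite Hlt by exact Hq'; destruct (Nat.ltb_spec q L); [lia|].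
        apply Nat.eqb_neq; intros ->; lia.
      * apply Hge; lia.
  - destruct (Hd (cell k L)) as [Hlt _]; rewrite Hlt by lia.
    destruct (Nat.ltb_spec (cell k L) L); [lia|apply Nat.eqb_refl].
Qed.

Lemma region_refine k s L d0 M d : region k s L d0 ->
  region k d0 (M + L) d -> region k s L d /\ agree d0 d M.
Proof.
  intros H0 Hd; split.
  - intro q; destruct (H0 q) as [Hlt0 Hge0]; destruct (Hd q) as [Hlt Hge]; split.
    + intro Hq; rewrite Hlt by lia; apply Hlt0, Hq.
    + intros Hq Hc; destruct (Nat.lt_ge_cases q (M + L)) as [Hq'|Hq'].
      * rewrite Hlt by exact Hq'; apply Hge0; assumption.
      * apply Hge; assumption.
  - intros q Hq; symmetry; apply (Hd q); lia.
Qed.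

Lemma region_mark_into_open k s L W : copen W ->
  (exists d, region k (truncate_mark s L (cell k L)) (S (cell k L)) d /\ W d) ->
  exists s' L', (S (cell k L) <= L')%nat /\
    forall d, region k s' L' d -> region k s L d /\ W d /\ d (cell k L) = true.
Proof.
  intros HW [d0 [Hd0 Wd0]]; destruct (HW d0 Wd0) as [M HM].
  exists d0, (M + S (cell k L))%nat; split; [lia|]; intros d Hd.
  destruct (region_refine _ _ _ _ _ _ Hd0 Hd) as [Hr A].
  destruct (region_mark k s L d Hr); auto.
Qed.

Lemma nested_regions_meet (k : nat -> nat) (s : nat -> nat -> bool) (L : nat -> nat) :
  (forall i d, region (k (S i)) (s (S i)) (L (S i)) d -> region (k i) (s i) (L i) d) ->
  (forall i, (i <= L i)%nat) ->
  exists x, forall i, region (k i) (s i) (L i) x.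
Proof.
  intros Hnest HL.
  assert (Hsub : forall i j d, (i <= j)%nat ->
            region (k j) (s j) (L j) d -> region (k i) (s i) (L i) d).
  { intros i j d Hij; induction Hij; auto. }
  exists (fun q => s (S q) q); intros i q.
  set (t := truncate (s (Nat.max i (S q))) (L (Nat.max i (S q)))).
  assert (Ht : forall j, (j <= Nat.max i (S q))%nat -> region (k j) (s j) (L j) t).
  { intros j Hj; apply (Hsub j (Nat.max i (S q))); [exact Hj|apply region_truncate]. }
  assert (Hx : t q = s (S q) q).
  { apply (Ht (S q) ltac:(lia) q); specialize (HL (S q)); lia. }
  rewrite <- Hx; apply (Ht i ltac:(lia) q).
Qed.

Lemma dependent_choice {A : Type} (P : nat -> A -> Prop) (R : nat -> A -> A -> Prop) (a0 : A) :
  P 0%nat a0 -> (forall i a, P i a -> exists a', P (S i) a' /\ R i a a') ->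
  exists f : nat -> A, forall i, P i (f i) /\ R i (f i) (f (S i)).
Proof.
  intros H0 Hstep.
  destruct (choice (fun (ia : nat * A) a' =>
              P (fst ia) (snd ia) -> P (S (fst ia)) a' /\ R (fst ia) (snd ia) a'))
    as [g Hg].
  { intros [i a]; destruct (classic (P i a)) as [Hp|Hp].
    - destruct (Hstep i a Hp) as [a' Ha']; exists a'; intros _; exact Ha'.
    - exists a; intro; contradiction. }
  set (f := fix f i := match i with O => a0 | S j => g (j, f j) end).
  assert (Hf : forall i, P i (f i)).
  { induction i as [|i IH]; [exact H0|apply (Hg (i, f i) IH)]. }
  exists f; intro i; split; [apply Hf|apply (Hg (i, f i) (Hf i))].
Qed.

(* If every subregion met every [V i], one could build a point lying in all
   [V i] whose column [k] is infinite. *)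
Lemma exists_subregion_avoiding k (V : nat -> (nat -> bool) -> Prop) :
  (forall i, copen (V i)) ->
  (forall d, (forall i, V i d) -> exists N, column_false_from d k N) ->
  forall s L, exists s' L' i,
    (forall d, region k s' L' d -> region k s L d) /\
    (forall d, region k s' L' d -> ~ V i d).
Proof.
  intros HV Hcol s L; apply NNPP; intro Hno.
  assert (Hmeet : forall s' L' i, (forall d, region k s' L' d -> region k s L d) ->
                    exists d, region k s' L' d /\ V i d).
  { intros s' L' i Hsub; apply NNPP; intro Hd; apply Hno; exists s', L', i.
    split; [exact Hsub|intros d Hr Hv; apply Hd; exists d; split; assumption]. }
  destruct (dependent_choice
    (fun i (a : (nat -> bool) * nat) =>
       (forall d, region k (fst a) (snd a) d -> region k s L d) /\ (i <= snd a)%nat)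
    (fun i a a' => forall d, region k (fst a') (snd a') d ->
       region k (fst a) (snd a) d /\ V i d /\ d (cell k (snd a)) = true)
    (s, L)) as [f Hf].
  - split; [auto|simpl; lia].
  - intros i [s0 L0] [Hsub Hi]; simpl in *.
    destruct (region_mark_into_open k s0 L0 (V i) (HV i)) as [s1 [L1 [HL1 Hnew]]].
    { apply Hmeet; intros d Hd; apply Hsub, (region_mark k s0 L0 d Hd). }
    exists (s1, L1); simpl; split; [split|exact Hnew].
    + intros d Hd; apply Hsub, Hnew, Hd.
    + pose proof (cell_ge k L0); lia.
  - destruct (nested_regions_meet (fun _ => k) (fun i => fst (f i)) (fun i => snd (f i)))
      as [x Hx].
    + intros i d; apply (proj2 (Hf i)).
    + intro i; apply (proj1 (Hf i)).
    + destruct (Hcol x (fun i => proj1 (proj2 (proj2 (Hf i) x (Hx (S i)))))) as [N HN].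
      pose proof (proj2 (proj2 (proj2 (Hf N) x (Hx (S N))))) as Ht.
      rewrite (HN _ (proj2 (proj1 (Hf N)))) in Ht; discriminate.
Qed.

(* Stage [k] confines the construction to a region avoiding some [V k i] while
   switching off columns [< k] beyond the current prefix; the limit then has
   finite columns but lies in no [\bigcap_i V k i]. *)
Theorem finite_columns_not_Sigma03 (V : nat -> nat -> (nat -> bool) -> Prop) :
  (forall k i, copen (V k i)) ->
  ~ (forall d, finite_columns d <-> exists k, forall i, V k i d).
Proof.
  intros HV Heq.
  destruct (dependent_choice
    (fun k (a : (nat -> bool) * nat) => (k <= snd a)%nat)
    (fun k a a' =>
       (forall d, region (S k) (fst a') (snd a') d -> region k (fst a) (snd a) d) /\
       exists i, forall d, region (S k) (fst a') (snd a') d -> ~ V k i d)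
    ((fun _ => false), 0%nat)) as [f Hf].
  - simpl; lia.
  - intros k [s0 L0] Hk; simpl in *.
    destruct (exists_subregion_avoiding k (V k) (HV k)
                (fun d Hd => proj2 (Heq d) (ex_intro _ k Hd) k) s0 L0)
      as [s1 [L1 [i [Hsub Havoid]]]].
    exists (truncate s1 L1, S (L1 + L0)); simpl; split; [lia|split].
    + intros d Hd; apply Hsub, (region_raise k (S k) s1 L1 (S (L1 + L0))); auto; lia.
    + exists i; intros d Hd; apply Havoid, (region_raise k (S k) s1 L1 (S (L1 + L0))); auto; lia.
  - destruct (nested_regions_meet (fun k => k) (fun k => fst (f k)) (fun k => snd (f k)))
      as [x Hx].
    + intros k d; apply (proj1 (proj2 (Hf k))).
    + intro k; apply (proj1 (Hf k)).
    + assert (Hfin : finite_columns x).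
      { intro m; exists (snd (f (S m))); intros n Hn.
        apply (Hx (S m) (cell m n)); [pose proof (cell_ge m n); lia|].
        rewrite column_cell; lia. }
      destruct (proj1 (Heq x) Hfin) as [k Hk].
      destruct (proj2 (proj2 (Hf k))) as [i Hi].
      exact (Hi x (Hx (S k)) (Hk i)).
Qed.

(** * The multi-valued function *)

Definition is_inf (A : R -> Prop) (v : R) : Prop :=
  (forall u, A u -> v <= u) /\ (forall e, 0 < e -> exists u, A u /\ u < v + e).

Lemma is_inf_unique A v v' : is_inf A v -> is_inf A v' -> v = v'.
Proof.
  intros [Hv Av] [Hv' Av']; apply Rle_antisym; apply Rnot_lt_le; intro Hlt.
  - destruct (Av' (v - v') ltac:(lra)) as [u [Hu Hlu]]; specialize (Hv u Hu); lra.
  - destruct (Av (v' - v) ltac:(lra)) as [u [Hu Hlu]]; specialize (Hv' u Hu); lra.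
Qed.

Lemma is_inf_exists A : (exists u, A u) -> (exists b, forall u, A u -> b <= u) ->
  exists v, is_inf A v.
Proof.
  intros [u0 Hu0] [b Hb].
  destruct (completeness (fun z => A (- z))) as [s [Hub Hleast]].
  - exists (- b); intros z Hz; specialize (Hb _ Hz); lra.
  - exists (- u0); rewrite Ropp_involutive; exact Hu0.
  - exists (- s); split.
    + intros u Hu; assert (- u <= s) by (apply Hub; rewrite Ropp_involutive; exact Hu); lra.
    + intros e He; apply NNPP; intro Hno.
      assert (s <= s - e); [|lra].
      apply Hleast; intros z Hz; apply Rnot_lt_le; intro Hlt.
      apply Hno; exists (- z); split; [exact Hz|lra].
Qed.

Lemma is_inf_ge A v c : is_inf A v -> (forall u, A u -> c <= u) -> c <= v.
Proof.
  intros [_ Av] Hc; apply Rnot_lt_le; intro Hlt.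
  destruct (Av (c - v) ltac:(lra)) as [u [Hu Hlu]]; specialize (Hc u Hu); lra.
Qed.

Definition weight (n : nat) : R := / 2 ^ S n.

Lemma weight_pos n : 0 < weight n.
Proof. unfold weight; apply Rinv_0_lt_compat, pow_lt; lra. Qed.

Lemma weight_0 : weight 0 = 1/2.
Proof. unfold weight; simpl; field. Qed.

Lemma weight_S n : weight (S n) = weight n / 2.
Proof. unfold weight; simpl; field; apply pow_nonzero; lra. Qed.

Lemma weight_le n n' : (n <= n')%nat -> weight n' <= weight n.
Proof. induction 1 as [|n' _ IH]; [lra|rewrite weight_S; pose proof (weight_pos n'); lra]. Qed.

Lemma weight_small e : 0 < e -> exists N, weight N < e.
Proof.
  intro He.
  destruct (pow_lt_1_zero (/2) ltac:(rewrite Rabs_pos_eq; lra) e He) as [N HN].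
  exists N; specialize (HN (S N) ltac:(lia)); unfold weight; rewrite <- pow_inv.
  rewrite Rabs_pos_eq in HN by (apply pow_le; lra); exact HN.
Qed.

Lemma le_of_forall_weight a b : (forall j, a < b + weight j) -> a <= b.
Proof.
  intro H; apply Rnot_lt_le; intro Hlt.
  destruct (weight_small (a - b) ltac:(lra)) as [j Hj]; specialize (H j); lra.
Qed.

(* Marking row [0] everywhere makes every column value exist and lie in
   [[0, 1/2]], so the windows around the integers [m] stay disjoint. *)
Definition column_weights (d : nat -> bool) (m : nat) (u : R) : Prop :=
  exists n, (n = 0%nat \/ d (cell m n) = true) /\ u = weight n.

Lemma column_value_exists d m : exists v, is_inf (column_weights d m) v.
Proof.
  apply is_inf_exists.
  - exists (weight 0); exists 0%nat; auto.
  - exists 0; intros u [n [_ ->]]; left; apply weight_pos.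
Qed.

Lemma column_value_bounds d m v : is_inf (column_weights d m) v -> 0 <= v <= 1/2.
Proof.
  intro Hv; split.
  - apply (is_inf_ge _ _ _ Hv); intros u [n [_ ->]]; left; apply weight_pos.
  - rewrite <- weight_0; apply Hv; exists 0%nat; auto.
Qed.

Lemma column_value_le d m n v :
  is_inf (column_weights d m) v -> d (cell m n) = true -> v <= weight n.
Proof. intros Hv Hd; apply Hv; exists n; auto. Qed.

Lemma column_value_infinite d m :
  (forall N, exists n, (N <= n)%nat /\ d (cell m n) = true) ->
  is_inf (column_weights d m) 0.
Proof.
  intro Hinf; split.
  - intros u [n [_ ->]]; left; apply weight_pos.
  - intros e He; destruct (weight_small e He) as [N HN]; destruct (Hinf N) as [n [Hn Hd]].
    exists (weight n); split; [exists n; auto|pose proof (weight_le _ _ Hn); lra].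
Qed.

Lemma column_value_finite d m N v :
  column_false_from d m N -> is_inf (column_weights d m) v -> weight N <= v.
Proof.
  intros Hfin Hv; apply (is_inf_ge _ _ _ Hv); intros u [n [Hn ->]].
  destruct (Nat.lt_ge_cases n N) as [HnN|HnN]; [apply weight_le; lia|].
  destruct Hn as [->|Hn]; [apply weight_le; lia|].
  rewrite Hfin in Hn by exact HnN; discriminate.
Qed.

Definition column_values (d : nat -> bool) (y : R) : Prop :=
  exists m : nat, is_inf (column_weights d m) (y - INR m).

Definition column_inf_mv (x y : R) : Prop :=
  ~ cantor_image x \/ exists d, x = cantor_map d /\ column_values d y.

Lemma column_inf_mv_cantor_map d y :
  column_inf_mv (cantor_map d) y <-> column_values d y.
Proof.
  split.
  - intros [Hx|[d' [E Hy]]]; [exfalso; apply Hx; exists d; reflexivity|].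
    apply cantor_map_inj in E; subst d'; exact Hy.
  - intro Hy; right; exists d; split; [reflexivity|exact Hy].
Qed.

Lemma nat_shift_sep (m m' : nat) v v' : m <> m' ->
  0 <= v <= 1/2 -> 0 <= v' <= 1/2 -> 1/2 <= Rabs ((INR m + v) - (INR m' + v')).
Proof.
  intros Hne Hv Hv'; destruct (Nat.lt_gt_cases m m') as [[Hl|Hl] _]; [exact Hne| |];
    apply le_INR in Hl; rewrite S_INR in Hl.
  - rewrite Rabs_minus_sym, Rabs_pos_eq; lra.
  - rewrite Rabs_pos_eq; lra.
Qed.

Lemma column_values_separated d y y' : column_values d y -> column_values d y' ->
  y <> y' -> 1/2 <= Rabs (y - y').
Proof.
  intros [m Hm] [m' Hm'] Hne.
  replace y with (INR m + (y - INR m)) by ring; replace y' with (INR m' + (y' - INR m')) by ring.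
  destruct (Nat.eq_dec m m') as [<-|Hmm].
  - pose proof (is_inf_unique _ _ _ Hm Hm'); exfalso; apply Hne; lra.
  - apply nat_shift_sep; [exact Hmm|eapply column_value_bounds; eauto..].
Qed.

Lemma separated_closed (A : R -> Prop) r : 0 < r ->
  (forall y y', A y -> A y' -> y <> y' -> r <= Rabs (y - y')) -> closed_set A.
Proof.
  intros Hr Hsep y Hy; unfold complementary in Hy.
  destruct (classic (exists z, A z /\ Rabs (z - y) < r / 2)) as [[z [Hz Hzy]]|Hfar].
  - assert (Hpos : 0 < Rabs (z - y)) by (apply Rabs_pos_lt; intro E; apply Hy;
      replace y with z by lra; exact Hz).
    exists (mkposreal _ Hpos); intros t Ht At; unfold disc in Ht; simpl in Ht.
    destruct (Req_dec t z) as [->|Htz]; [lra|].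
    pose proof (Hsep t z At Hz Htz).
    pose proof (Rabs_triang (t - y) (y - z)); rewrite (Rabs_minus_sym y z) in *.
    replace (t - y + (y - z)) with (t - z) in * by ring; lra.
  - exists (mkposreal (r / 2) ltac:(lra)); intros t Ht At; apply Hfar; exists t; auto.
Qed.

Lemma column_inf_mv_nonempty x : exists y, column_inf_mv x y.
Proof.
  destruct (classic (cantor_image x)) as [[d ->]|Hx]; [|exists 0; left; exact Hx].
  destruct (column_value_exists d 0) as [v Hv]; exists v.
  apply column_inf_mv_cantor_map; exists 0%nat; simpl; rewrite Rminus_0_r; exact Hv.
Qed.

Lemma column_inf_mv_closed x : closed_set (column_inf_mv x).
Proof.
  destruct (classic (cantor_image x)) as [[d ->]|Hx].
  - apply (separated_closed _ (1/2)); [lra|]; intros y y' Hy Hy'.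
    apply column_inf_mv_cantor_map in Hy, Hy'; apply (column_values_separated d); auto.
  - intros y Hy; exfalso; apply Hy; left; exact Hx.
Qed.

Lemma infinite_column_continuous d m :
  (forall N, exists n, (N <= n)%nat /\ d (cell m n) = true) ->
  mv_continuous_at column_inf_mv (cantor_map d).
Proof.
  intro Hinf; exists (INR m); split.
  { apply column_inf_mv_cantor_map; exists m; rewrite Rminus_diag.
    apply column_value_infinite, Hinf. }
  intros e He; destruct (weight_small e He) as [N HN]; destruct (Hinf N) as [n [Hn Hd]].
  exists ((/4) ^ S (cell m n) / 2); split; [pose proof (quarter_pow_pos (S (cell m n))); lra|].
  intros x' _ Hx'.
  destruct (classic (cantor_image x')) as [[d' ->]|Hout];
    [|exists (INR m); split; [left; exact Hout|rewrite Rminus_diag, Rabs_R0; exact He]].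
  assert (Hd' : d' (cell m n) = true).
  { rewrite <- Hd; symmetry; apply (cantor_map_close_agree d d' (S (cell m n))); [|lia].
    rewrite Rabs_minus_sym; exact Hx'. }
  destruct (column_value_exists d' m) as [v Hv].
  exists (INR m + v); split.
  - apply column_inf_mv_cantor_map; exists m; replace (INR m + v - INR m) with v by ring; exact Hv.
  - pose proof (column_value_bounds _ _ _ Hv); pose proof (column_value_le _ _ _ _ Hv Hd').
    pose proof (weight_le _ _ Hn).
    replace (INR m - (INR m + v)) with (- v) by ring; rewrite Rabs_Ropp, Rabs_pos_eq; lra.
Qed.

(* At a point with finite columns every value [m + v] has [v > 0]; marking a far
   cell of column [m] moves nearby values of column [m] below [v / 2]. *)
Lemma finite_columns_discontinuous d :
  finite_columns d -> ~ mv_continuous_at column_inf_mv (cantor_map d).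
Proof.
  intros Hfin [y [Hy Hc]]; apply column_inf_mv_cantor_map in Hy; destruct Hy as [m Hm].
  destruct (Hfin m) as [N HN]; pose proof (column_value_finite _ _ _ _ HN Hm) as Hv.
  pose proof (weight_pos N); pose proof (weight_le _ _ (Nat.le_0_l N)); rewrite weight_0 in *.
  destruct (Hc (weight N / 2) ltac:(lra)) as [delta [Hdelta Hnear]].
  destruct (quarter_pow_small delta Hdelta) as [L HL].
  set (n := S (L + N)); set (d' := set_cell d (cell m n)).
  assert (A : agree d d' L) by (apply agree_set_cell; pose proof (cell_ge m n); unfold n in *; lia).
  destruct (Hnear (cantor_map d') (cantor_map_I01 d')) as [y' [Hy' Hyy']].
  { pose proof (cantor_map_agree_close _ _ _ A); pose proof (quarter_pow_pos L).
    rewrite Rabs_minus_sym; lra. }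
  apply column_inf_mv_cantor_map in Hy'; destruct Hy' as [m' Hm'].
  replace y with (INR m + (y - INR m)) in Hyy' by ring.
  replace y' with (INR m' + (y' - INR m')) in Hyy' by ring.
  pose proof (column_value_bounds _ _ _ Hm); pose proof (column_value_bounds _ _ _ Hm').
  destruct (Nat.eq_dec m m') as [<-|Hmm].
  - assert (Hd' : d' (cell m n) = true) by (unfold d', set_cell; rewrite Nat.eqb_refl; reflexivity).
    pose proof (column_value_le _ _ _ _ Hm' Hd').
    pose proof (weight_le (S N) n ltac:(unfold n; lia)); rewrite weight_S in *.
    apply Rabs_def2 in Hyy'; lra.
  - pose proof (nat_shift_sep m m' (y - INR m) (y' - INR m') Hmm ltac:(lra) ltac:(lra)); lra.
Qed.

Lemma continuity_points_cantor_map d :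
  continuity_points column_inf_mv (cantor_map d) <-> ~ finite_columns d.
Proof.
  split.
  - intros [_ Hc] Hfin; exact (finite_columns_discontinuous d Hfin Hc).
  - intro Hinf; split; [apply cantor_map_I01|].
    apply not_all_ex_not in Hinf; destruct Hinf as [m Hm].
    apply (infinite_column_continuous d m); intro N; apply NNPP; intro Hno.
    apply Hm; exists N; intros n Hn; apply Bool.not_true_is_false; intro Hd.
    apply Hno; exists n; split; assumption.
Qed.

(** * The graph is G_delta *)

Definition cantor_R_open (P : (nat -> bool) -> R -> Prop) : Prop :=
  forall d y, P d y -> exists L e, 0 < e /\
    forall d' y', agree d d' L -> Rabs (y' - y) < e -> P d' y'.

Lemma cantor_R_open_and P Q : cantor_R_open P -> cantor_R_open Q ->
  cantor_R_open (fun d y => P d y /\ Q d y).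
Proof.
  intros HP HQ d y [Pd Qd].
  destruct (HP d y Pd) as [L1 [e1 [He1 H1]]]; destruct (HQ d y Qd) as [L2 [e2 [He2 H2]]].
  exists (L1 + L2)%nat, (Rmin e1 e2); split; [apply Rmin_pos; assumption|].
  intros d' y' A Hy; pose proof (Rmin_l e1 e2); pose proof (Rmin_r e1 e2); split.
  - apply H1; [apply (agree_le _ _ _ (L1 + L2)); [lia|exact A]|lra].
  - apply H2; [apply (agree_le _ _ _ (L1 + L2)); [lia|exact A]|lra].
Qed.

Lemma cantor_R_open_or P Q : cantor_R_open P -> cantor_R_open Q ->
  cantor_R_open (fun d y => P d y \/ Q d y).
Proof.
  intros HP HQ d y [Pd|Qd].
  - destruct (HP d y Pd) as [L [e [He H]]]; exists L, e; split; [exact He|]; auto.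
  - destruct (HQ d y Qd) as [L [e [He H]]]; exists L, e; split; [exact He|]; auto.
Qed.

Lemma cantor_R_open_ex (P : nat -> (nat -> bool) -> R -> Prop) :
  (forall k, cantor_R_open (P k)) -> cantor_R_open (fun d y => exists k, P k d y).
Proof.
  intros HP d y [k Pk]; destruct (HP k d y Pk) as [L [e [He H]]].
  exists L, e; split; [exact He|]; intros d' y' A Hy; exists k; auto.
Qed.

Lemma cantor_R_open_prefix (P : (nat -> bool) -> Prop) L :
  (forall d d', agree d d' L -> P d -> P d') -> cantor_R_open (fun d _ => P d).
Proof. intros HP d y Pd; exists L, 1; split; [lra|]; intros d' y' A _; exact (HP d d' A Pd). Qed.

Lemma cantor_R_open_gt a : cantor_R_open (fun _ y => a < y).
Proof.
  intros d y Hy; exists 0%nat, (y - a); split; [lra|].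
  intros d' y' _ Hy'; apply Rabs_def2 in Hy'; lra.
Qed.

Lemma cantor_R_open_lt b : cantor_R_open (fun _ y => y < b).
Proof.
  intros d y Hy; exists 0%nat, (b - y); split; [lra|].
  intros d' y' _ Hy'; apply Rabs_def2 in Hy'; lra.
Qed.

Lemma cantor_R_open_cell m n (b : bool) : cantor_R_open (fun d _ => d (cell m n) = b).
Proof. apply (cantor_R_open_prefix _ (S (cell m n))); intros d d' A Hd; rewrite <- A by lia; exact Hd. Qed.

(* [m] is read off from [y] (the windows around the integers are disjoint), and
   [y - m] is compared with the column weights up to precision [weight j]. *)
Definition value_test (n j : nat) (d : nat -> bool) (y : R) : Prop :=
  exists m : nat, INR m - 1/4 < y /\ y < INR m + 3/4 /\
    ((n <> 0%nat /\ d (cell m n) = false) \/ y < INR m + weight n + weight j) /\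
    exists n', (n' = 0%nat \/ d (cell m n') = true) /\ INR m + weight n' - weight j < y.

Lemma value_test_open n j : cantor_R_open (value_test n j).
Proof.
  apply cantor_R_open_ex; intro m.
  repeat apply cantor_R_open_and; try apply cantor_R_open_gt; try apply cantor_R_open_lt.
  - apply cantor_R_open_or; [|apply cantor_R_open_lt].
    apply cantor_R_open_and; [|apply cantor_R_open_cell].
    apply (cantor_R_open_prefix (fun _ => n <> 0%nat) 0); auto.
  - apply cantor_R_open_ex; intro n'; apply cantor_R_open_and; [|apply cantor_R_open_gt].
    apply cantor_R_open_or; [|apply cantor_R_open_cell].
    apply (cantor_R_open_prefix (fun _ => n' = 0%nat) 0); auto.
Qed.

Lemma nat_window_unique (m m' : nat) y :
  INR m - 1/4 < y < INR m + 3/4 -> INR m' - 1/4 < y < INR m' + 3/4 -> m = m'.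
Proof.
  intros Hm Hm'; destruct (Nat.lt_total m m') as [Hl|[E|Hl]]; [|exact E|];
    apply le_INR in Hl; rewrite S_INR in Hl; lra.
Qed.

Lemma column_values_tests d y : column_values d y <-> forall n j, value_test n j d y.
Proof.
  split.
  - intros [m Hm] n j; pose proof (column_value_bounds _ _ _ Hm); pose proof (weight_pos j).
    exists m; split; [lra|split; [lra|split]].
    + destruct (Nat.eq_dec n 0) as [->|Hn0]; [right; rewrite weight_0; lra|].
      destruct (d (cell m n)) eqn:Hd; [right|left; split; [exact Hn0|reflexivity]].
      pose proof (column_value_le _ _ _ _ Hm Hd); lra.
    + destruct (proj2 Hm (weight j) (weight_pos j)) as [u [[n' [Hn' ->]] Hu]].
      exists n'; split; [exact Hn'|lra].
  - intro Htest; destruct (Htest 0%nat 0%nat) as [m [Hlo [Hhi _]]]; exists m.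
    assert (Hm : forall n j, ((n <> 0%nat /\ d (cell m n) = false) \/ y < INR m + weight n + weight j) /\
                   exists n', (n' = 0%nat \/ d (cell m n') = true) /\ INR m + weight n' - weight j < y).
    { intros n j; destruct (Htest n j) as [m' [Hlo' [Hhi' Hrest]]].
      rewrite (nat_window_unique m m' y); [exact Hrest|split; assumption|split; assumption]. }
    split.
    + intros u [n [Hn ->]]; apply le_of_forall_weight; intro j.
      destruct (proj1 (Hm n j)) as [[Hn0 Hd]|Hlt]; [|lra].
      destruct Hn as [Hn|Hn]; [contradiction|congruence].
    + intros e He; destruct (weight_small e He) as [j Hj].
      destruct (proj2 (Hm 0%nat j)) as [n' [Hn' Hlt]].
      exists (weight n'); split; [exists n'; auto|lra].
Qed.

Definition lift_to_R (P : (nat -> bool) -> R -> Prop) (p : R * R) : Prop :=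
  exists e, 0 < e /\ forall d y,
    Rabs (fst p - cantor_map d) < e -> Rabs (y - snd p) < e -> P d y.

Lemma lift_to_R_open P : open_RR (lift_to_R P).
Proof.
  intros p [e [He H]]; exists (e / 2); split; [lra|].
  intros q Hq1 Hq2; exists (e / 2); split; [lra|]; intros d y Hd Hy; apply H.
  - pose proof (Rabs_triang (fst p - fst q) (fst q - cantor_map d)).
    rewrite Rabs_minus_sym in Hq1.
    replace (fst p - fst q + (fst q - cantor_map d)) with (fst p - cantor_map d) in * by ring; lra.
  - pose proof (Rabs_triang (y - snd q) (snd q - snd p)).
    replace (y - snd q + (snd q - snd p)) with (y - snd p) in * by ring; lra.
Qed.

Lemma lift_to_R_cantor_map P d y : cantor_R_open P ->
  lift_to_R P (cantor_map d, y) <-> P d y.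
Proof.
  intro HP; split.
  - intros [e [He H]]; apply H; simpl; rewrite Rminus_diag, Rabs_R0; exact He.
  - intro Pd; destruct (HP d y Pd) as [L [e [He H]]].
    exists (Rmin e ((/4) ^ L / 2)); split.
    { apply Rmin_pos; [exact He|pose proof (quarter_pow_pos L); lra]. }
    intros d' y' Hd' Hy'; simpl in *.
    pose proof (Rmin_l e ((/4) ^ L / 2)); pose proof (Rmin_r e ((/4) ^ L / 2)).
    apply H; [apply cantor_map_close_agree|]; lra.
Qed.

Lemma lift_to_R_outside P x y : ~ cantor_image x -> lift_to_R P (x, y).
Proof.
  intro Hx; destruct (cantor_image_compl_open x Hx) as [e [He Hfar]].
  exists e; split; [exact He|]; intros d y' Hd; specialize (Hfar d); simpl in Hd; lra.
Qed.

Definition value_test_at (k : nat) : (nat -> bool) -> R -> Prop :=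
  value_test (fst (Cantor.of_nat k)) (snd (Cantor.of_nat k)).

Lemma column_inf_mv_tests x y :
  column_inf_mv x y <-> forall k, lift_to_R (value_test_at k) (x, y).
Proof.
  destruct (classic (cantor_image x)) as [[d ->]|Hx].
  - rewrite column_inf_mv_cantor_map, column_values_tests.
    setoid_rewrite lift_to_R_cantor_map; [|apply value_test_open].
    split; [intros H k; apply H|intros H n j].
    specialize (H (Cantor.to_nat (n, j))); unfold value_test_at in H.
    rewrite Cantor.cancel_of_to in H; exact H.
  - split; [intros _ k; apply lift_to_R_outside, Hx|intros _; left; exact Hx].
Qed.

(** * Borel classes *)

Lemma Pi0_2_of_Gdelta {T : Type} (O : (T -> Prop) -> Prop) D A (U : nat -> T -> Prop) :
  (forall k, O (U k)) -> (forall x, A x <-> D x /\ forall k, U k x) -> Pi0 O D 2 A.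
Proof.
  intros HU HA; split; [intros x Hx; apply HA, Hx|].
  apply (Sigma0_union O D 1 _ (fun k x => D x /\ ~ U k x)).
  - intros k x [Hx _]; exact Hx.
  - intro k; exists 1%nat; split; [lia|]; apply (Sigma0_open O D (U k)); [apply HU|].
    intro x; split; [intros [Hx Hn]; split; [exact Hx|]; apply NNPP; intro; apply Hn; auto|].
    intros [Hx Hu]; split; [exact Hx|]; intros [_ Hn]; contradiction.
  - intro x; rewrite HA; split.
    + intros [Hx Hn]; apply NNPP; intro Hno; apply Hn; split; [exact Hx|].
      intro k; apply NNPP; intro Hk; apply Hno; exists k; split; assumption.
    + intros [k [Hx Hk]]; split; [exact Hx|]; intros [_ HU']; exact (Hk (HU' k)).
Qed.

Lemma Sigma0_1_inv {T : Type} (O : (T -> Prop) -> Prop) D A :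
  Sigma0 O D 1 A -> exists U, O U /\ forall x, A x <-> D x /\ U x.
Proof.
  intro H; inversion H as [U A' HU HA| n A' B _ Hj _]; subst.
  - exists U; split; assumption.
  - destruct (Hj 0%nat) as [j [Hj' _]]; lia.
Qed.

Lemma Sigma0_SS_inv {T : Type} (O : (T -> Prop) -> Prop) D n A :
  Sigma0 O D (S (S n)) A -> exists B : nat -> T -> Prop,
    (forall k, exists j, (1 <= j <= S n)%nat /\ Sigma0 O D j (fun x => D x /\ ~ B k x)) /\
    (forall x, A x <-> exists k, B k x).
Proof. intro H; inversion H; subst; eexists; split; eassumption. Qed.

Lemma Sigma0_1_compl_preimage B :
  Sigma0 open_set I01 1 (fun x => I01 x /\ ~ B x) ->
  exists U, copen (fun d => U (cantor_map d)) /\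
    forall d, B (cantor_map d) <-> ~ U (cantor_map d).
Proof.
  intro HS; destruct (Sigma0_1_inv _ _ _ HS) as [U [HU HB]].
  exists U; split; [apply copen_preimage_cantor_map, HU|].
  intro d; pose proof (cantor_map_I01 d) as Hd; specialize (HB (cantor_map d)); split.
  - intros Hb Hu; apply (proj2 HB (conj Hd Hu)), Hb.
  - intro Hu; apply NNPP; intro Hb; apply Hu, (proj1 HB (conj Hd Hb)).
Qed.

Lemma Pi0_preimage B :
  (exists j, (1 <= j <= 2)%nat /\ Sigma0 open_set I01 j (fun x => I01 x /\ ~ B x)) ->
  cantor_Gdelta (fun d => B (cantor_map d)).
Proof.
  intros [j [Hj HS]]; assert (j = 1%nat \/ j = 2%nat) as [->| ->] by lia.
  - destruct (Sigma0_1_compl_preimage B HS) as [U [HU HB]].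
    destruct (copen_compl_Gdelta _ HU) as [V [HV HUV]].
    exists V; split; [exact HV|intro d; rewrite HB; apply HUV].
  - destruct (Sigma0_SS_inv _ _ _ _ HS) as [Bs [HBs HB]].
    destruct (choice (fun i U => copen (fun d => U (cantor_map d)) /\
                        forall d, Bs i (cantor_map d) <-> ~ U (cantor_map d))) as [U HU].
    { intro i; destruct (HBs i) as [j' [Hj' HS']]; replace j' with 1%nat in HS' by lia.
      apply Sigma0_1_compl_preimage, HS'. }
    exists (fun i d => U i (cantor_map d)); split; [intro i; apply HU|].
    intro d; pose proof (cantor_map_I01 d) as Hd; specialize (HB (cantor_map d)); split.
    + intros Hb i; apply NNPP; intro Hu; apply (proj2 (proj2 (HU i) d)) in Hu.
      apply (proj2 HB (ex_intro _ i Hu)), Hb.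
    + intros HUd; apply NNPP; intro Hb; destruct (proj1 HB (conj Hd Hb)) as [i Hi].
      exact (proj1 (proj2 (HU i) d) Hi (HUd i)).
Qed.

Lemma Sigma0_3_preimage A : Sigma0 open_set I01 3 A ->
  exists V : nat -> nat -> (nat -> bool) -> Prop, (forall k i, copen (V k i)) /\
    forall d, A (cantor_map d) <-> exists k, forall i, V k i d.
Proof.
  intro HS; destruct (Sigma0_SS_inv _ _ _ _ HS) as [B [HB HA]].
  destruct (choice (fun k (V : nat -> (nat -> bool) -> Prop) => (forall i, copen (V i)) /\
                      forall d, B k (cantor_map d) <-> forall i, V i d)) as [V HV].
  { intro k; apply Pi0_preimage, HB. }
  exists V; split; [intro k; apply HV|].
  intro d; rewrite HA; split.
  - intros [k Hk]; exists k; apply HV, Hk.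
  - intros [k Hk]; exists k; apply HV, Hk.
Qed.

Theorem theorem2p6 :
  exists F : R -> R -> Prop,
    (forall x, I01 x -> exists y, F x y) /\
    (forall x, I01 x -> closed_set (F x)) /\
    Pi0 open_RR I01xR 2 (graph F) /\
    ~ Pi0 open_set I01 3 (continuity_points F).
Proof.
  exists column_inf_mv; split; [intros x _; apply column_inf_mv_nonempty|].
  split; [intros x _; apply column_inf_mv_closed|split].
  - apply (Pi0_2_of_Gdelta _ _ _ (fun k => lift_to_R (value_test_at k))).
    + intro k; apply lift_to_R_open.
    + intros [x y]; unfold graph, I01xR; simpl; rewrite column_inf_mv_tests; tauto.
  - intros [_ HS]; destruct (Sigma0_3_preimage _ HS) as [V [HV HA]].
    apply (finite_columns_not_Sigma03 V HV); intro d; rewrite <- HA.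
    rewrite continuity_points_cantor_map; pose proof (cantor_map_I01 d); tauto.
Qed.
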